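(* Let $n\ge 2$ and let $P_n(x_0)$ be a $\Pi^0_{2n-3}$-predicate on $\mathbb N_+$. Then for each $2\le i<n$ there is a $\Pi^0_{2i-3}$-predicate $P_i(x_0,x_1,y_1,x_2,y_2,\dots,x_{n-i},y_{n-i})$ on $\mathbb N_+$ such that, for every $2\le i<n$, writing $\overline x=(x_0,x_1,y_1,\dots,x_{n-i-1},y_{n-i-1})$ and letting all quantifiers range over $\mathbb N_+$: (i) $P_{i+1}(\overline x)$ is logically equivalent to $\forall x_{n-i}\,\exists y_{n-i}: P_i(\overline x,x_{n-i},y_{n-i})$; (ii) if $\forall y_{n-i}:\neg P_i(\overline x,x_{n-i},y_{n-i})$, then $\forall x'_{n-i}\ge x_{n-i}\ \forall y_{n-i}:\neg P_i(\overline x,x'_{n-i},y_{n-i})$.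
   Context: $\mathbb N_+=\{1,2,\dots\}$. $\Pi^0_m$ denotes the $m$-th universal level of the arithmetical hierarchy. *)

From mathcomp Require Import all_boot.
Set Implicit Arguments. Unset Strict Implicit. Unset Printing Implicit Defensive.

Inductive term : Type :=
| TVar  : nat -> term
| TZero : term
| TSucc : term -> term
| TAdd  : term -> term -> term
| TMul  : term -> term -> term.

Inductive form : Type :=
| FEq  : term -> term -> form
| FLt  : term -> term -> form
| FNeg : form -> form
| FAnd : form -> form -> form
| FOr  : form -> form -> form
| FImp : form -> form -> form
| FBAll : nat -> term -> form -> form
| FBEx  : nat -> term -> form -> form
| FAll : nat -> form -> form
| FEx  : nat -> form -> form.

Fixpoint teval (e : nat -> nat) (t : term) : nat :=
  match t with
  | TVar k => e k
  | TZero => 0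
  | TSucc t => (teval e t).+1
  | TAdd t u => teval e t + teval e u
  | TMul t u => teval e t * teval e u
  end.

Definition upd (e : nat -> nat) (x a : nat) : nat -> nat :=
  fun k => if k == x then a else e k.

Fixpoint sat (e : nat -> nat) (f : form) : Prop :=
  match f with
  | FEq t u => teval e t = teval e u
  | FLt t u => teval e t < teval e u
  | FNeg f => ~ sat e f
  | FAnd f g => sat e f /\ sat e g
  | FOr f g => sat e f \/ sat e g
  | FImp f g => sat e f -> sat e g
  | FBAll x t f => forall a, a < teval e t -> sat (upd e x a) f
  | FBEx x t f => exists2 a, a < teval e t & sat (upd e x a) f
  | FAll x f => forall a, sat (upd e x a) f
  | FEx x f => exists a, sat (upd e x a) f
  end.

Fixpoint delta0 (f : form) : Prop :=
  match f with
  | FEq _ _ | FLt _ _ => True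
  | FNeg f => delta0 f
  | FAnd f g | FOr f g | FImp f g => delta0 f /\ delta0 g
  | FBAll _ _ f | FBEx _ _ f => delta0 f
  | FAll _ _ | FEx _ _ => False
  end.

Inductive isSigma : nat -> form -> Prop :=
| Sigma0 f : delta0 f -> isSigma 0 f
| SigmaPi m f : isPi m f -> isSigma m.+1 f
| SigmaEx m x f : isSigma m.+1 f -> isSigma m.+1 (FEx x f)
with isPi : nat -> form -> Prop :=
| Pi0 f : delta0 f -> isPi 0 f
| PiSigma m f : isSigma m f -> isPi m.+1 f
| PiAll m x f : isPi m.+1 f -> isPi m.+1 (FAll x f).

(* A k-ary predicate on N_+ is represented by P : seq nat -> Prop, only its values
   on sequences of length k with all entries positive being relevant. *)
Definition positive_args (k : nat) (v : seq nat) : Prop :=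
  size v = k /\ all (fun a => 0 < a) v.

Definition Pi0_pred (m k : nat) (P : seq nat -> Prop) : Prop :=
  exists f : form, isPi m f /\
    forall v : seq nat, positive_args k v -> (P v <-> sat (fun j => nth 0 v j) f).

From mathcomp Require Import all_boot zify.
From Stdlib Require Import Classical FunctionalExtensionality ClassicalEpsilon Setoid Morphisms.
Set Implicit Arguments. Unset Strict Implicit. Unset Printing Implicit Defensive.

(* The core is a normal form: every Pi_(m+2) formula F is equivalent to
   forall x, exists y, G(x, y) with G in Pi_m, antitone in x and monotone in y.
   It is obtained by contracting blocks of like quantifiers,
     (exists a y, R a y) <-> exists y, exists a < y, R a y   (R monotone in y),
     (forall a x, exists y, R a x y) <-> forall x, exists y, forall a < x, R a x y,
   which keeps us inside Pi_m because Pi_m and Sigma_m are closed under bounded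
   quantification (by the collection principle for bounded ranges).  Iterating
   from P_n and placing the two new variables right after the old ones gives the
   P_i; monotonicity lets x and y range over N_+ in (i) and yields (ii). *)

Fixpoint tfresh (t : term) : nat :=
  match t with
  | TVar k => k.+1
  | TZero => 0
  | TSucc t => tfresh t
  | TAdd t u | TMul t u => maxn (tfresh t) (tfresh u)
  end.

Fixpoint fresh (f : form) : nat :=
  match f with
  | FEq t u | FLt t u => maxn (tfresh t) (tfresh u)
  | FNeg f => fresh f
  | FAnd f g | FOr f g | FImp f g => maxn (fresh f) (fresh g)
  | FBAll x t f | FBEx x t f => maxn x.+1 (maxn (tfresh t) (fresh f))
  | FAll x f | FEx x f => maxn x.+1 (fresh f)
  end.

Fixpoint nquant (f : form) : nat :=
  match f with
  | FEq _ _ | FLt _ _ => 0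
  | FNeg f | FBAll _ _ f | FBEx _ _ f => nquant f
  | FAnd f g | FOr f g | FImp f g => nquant f + nquant g
  | FAll _ f | FEx _ f => (nquant f).+1
  end.

Fixpoint tren (s : nat -> nat) (t : term) : term :=
  match t with
  | TVar k => TVar (s k)
  | TZero => TZero
  | TSucc t => TSucc (tren s t)
  | TAdd t u => TAdd (tren s t) (tren s u)
  | TMul t u => TMul (tren s t) (tren s u)
  end.

Fixpoint fren (s : nat -> nat) (f : form) : form :=
  match f with
  | FEq t u => FEq (tren s t) (tren s u)
  | FLt t u => FLt (tren s t) (tren s u)
  | FNeg f => FNeg (fren s f)
  | FAnd f g => FAnd (fren s f) (fren s g)
  | FOr f g => FOr (fren s f) (fren s g)
  | FImp f g => FImp (fren s f) (fren s g)
  | FBAll x t f => FBAll (s x) (tren s t) (fren s f)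
  | FBEx x t f => FBEx (s x) (tren s t) (fren s f)
  | FAll x f => FAll (s x) (fren s f)
  | FEx x f => FEx (s x) (fren s f)
  end.

Lemma upd_eq e x a : upd e x a x = a.
Proof. by rewrite /upd eqxx. Qed.

Lemma upd_neq e x a y : y != x -> upd e x a y = e y.
Proof. by rewrite /upd => /negbTE ->. Qed.

Lemma updC e x y a b : x != y -> upd (upd e x a) y b = upd (upd e y b) x a.
Proof.
move=> xy; apply: functional_extensionality => j; rewrite /upd.
by case: (eqVneq j y) => // ->; rewrite eq_sym (negbTE xy).
Qed.

Lemma eq_teval e1 e2 t :
  (forall j, j < tfresh t -> e1 j = e2 j) -> teval e1 t = teval e2 t.
Proof.
elim: t => //= [k|t IH|t IHt u IHu|t IHt u IHu] E; first exact: E.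
- by rewrite IH.
all: by rewrite IHt ?IHu // => j hj; apply: E; lia.
Qed.

Lemma eq_sat f e1 e2 :
  (forall j, j < fresh f -> e1 j = e2 j) -> (sat e1 f <-> sat e2 f).
Proof.
elim: f e1 e2 => /= [t u|t u|f IH|f IHf g IHg|f IHf g IHg|f IHf g IHg
                    |x t f IH|x t f IH|x f IH|x f IH] e1 e2 E;
  rewrite ?(@eq_teval e1 e2 t) ?(@eq_teval e1 e2 u) //;
  try by move=> j hj; apply: E; lia.
- by rewrite (IH e1 e2).
1-3: by rewrite (IHf e1 e2) ?(IHg e1 e2) // => j hj; apply: E; lia.
all: have Ea a : sat (upd e1 x a) f <-> sat (upd e2 x a) f
       by apply: IH => j hj; rewrite /upd; case: eqP => // _; apply: E; lia.
- by split=> H a ha; apply/Ea/H.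
- by split=> -[a ha /Ea]; exists a.
- by split=> H a; apply/Ea/H.
- by split=> -[a /Ea]; exists a.
Qed.

Lemma sat_upd_fresh f e z a : fresh f <= z -> (sat (upd e z a) f <-> sat e f).
Proof. by move=> hz; apply: eq_sat => j hj; rewrite upd_neq //; apply/eqP; lia. Qed.

Lemma teval_ren s e t : teval e (tren s t) = teval (e \o s) t.
Proof. by elim: t => //= [t ->|t -> u ->|t -> u ->]. Qed.

Lemma upd_ren s e x a : injective s -> upd e (s x) a \o s = upd (e \o s) x a.
Proof. by move=> s_inj; apply: functional_extensionality => j; rewrite /upd /= (inj_eq s_inj). Qed.

Lemma sat_ren s f e : injective s -> (sat e (fren s f) <-> sat (e \o s) f).
Proof.
move=> s_inj; elim: f e => /= [t u|t u|f IH|f IHf g IHg|f IHf g IHg|f IHf g IHg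
                    |x t f IH|x t f IH|x f IH|x f IH] e;
  rewrite ?teval_ren ?IH ?IHf ?IHg //.
all: have Ea a : sat (upd e (s x) a) (fren s f) <-> sat (upd (e \o s) x a) f
       by rewrite IH upd_ren.
- by split=> H a ha; apply/Ea/H.
- by split=> -[a ha /Ea]; exists a.
- by split=> H a; apply/Ea/H.
- by split=> -[a /Ea]; exists a.
Qed.

Lemma nquant_ren s f : nquant (fren s f) = nquant f.
Proof. by elim: f => //= *; congruence. Qed.

Lemma delta0_ren s f : delta0 f -> delta0 (fren s f).
Proof. by elim: f => //= f IHf g IHg [/IHf ? /IHg ?]. Qed.

Scheme isPi_mut := Induction for isPi Sort Prop
with isSigma_mut := Induction for isSigma Sort Prop.
Combined Scheme isPi_isSigma_mut from isPi_mut, isSigma_mut.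

Lemma isPi_isSigma_ren s :
  (forall m f, isPi m f -> isPi m (fren s f)) /\
  (forall m f, isSigma m f -> isSigma m (fren s f)).
Proof.
apply: (@isPi_isSigma_mut (fun m f _ => isPi m (fren s f))
                          (fun m f _ => isSigma m (fren s f)));
  move=> *; solve [exact/Pi0/delta0_ren | exact/Sigma0/delta0_ren | by constructor].
Qed.

Lemma isPi_ren s m f : isPi m f -> isPi m (fren s f).
Proof. exact: (isPi_isSigma_ren s).1. Qed.

Lemma isSigma_ren s m f : isSigma m f -> isSigma m (fren s f).
Proof. exact: (isPi_isSigma_ren s).2. Qed.

Definition fequiv (f g : form) : Prop := forall e, sat e f <-> sat e g.

#[local] Instance fequiv_equiv : Equivalence fequiv.
Proof. by split=> [f e|f g E e|f g h E1 E2 e]; rewrite ?E1 ?E. Qed.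

#[local] Instance sat_fequiv e : Proper (fequiv ==> iff) (sat e).
Proof. by move=> f g; apply. Qed.

#[local] Instance FAll_fequiv x : Proper (fequiv ==> fequiv) (FAll x).
Proof. by move=> f g E e /=; split=> H a; apply/E. Qed.

#[local] Instance FEx_fequiv x : Proper (fequiv ==> fequiv) (FEx x).
Proof. by move=> f g E e /=; split=> -[a /E]; exists a. Qed.

#[local] Instance FBAll_fequiv x t : Proper (fequiv ==> fequiv) (FBAll x t).
Proof. by move=> f g E e /=; split=> H a ha; apply/E/H. Qed.

#[local] Instance FBEx_fequiv x t : Proper (fequiv ==> fequiv) (FBEx x t).
Proof. by move=> f g E e /=; split=> -[a ha /E]; exists a. Qed.

Definition swap (x z j : nat) : nat := if j == x then z else if j == z then x else j.

Lemma swap_inj x z : injective (swap x z).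
Proof.
have swapK : involutive (swap x z).
  move=> j; rewrite /swap.
  case: (eqVneq j x) => [->|jx]; first by case: (eqVneq z x) => [->|]; rewrite ?eqxx.
  case: (eqVneq j z) => [->|jz]; first by rewrite eqxx.
  by rewrite (negbTE jx) (negbTE jz).
exact: can_inj swapK.
Qed.

Lemma sat_swap x z g e c : fresh g <= z ->
  (sat (upd e x c) g <-> sat (upd e z c) (fren (swap x z) g)).
Proof.
move=> hz; rewrite sat_ren; last exact: swap_inj.
apply: eq_sat => j hj; rewrite /= /swap /upd.
have /negbTE jz : j != z by apply/eqP; lia.
by case: eqP => _; rewrite ?eqxx ?jz.
Qed.

Lemma alpha_all x z g : fresh g <= z -> fequiv (FAll x g) (FAll z (fren (swap x z) g)).
Proof. by move=> hz e /=; split=> H c; apply/(@sat_swap x z g e c hz)/H. Qed.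

Lemma alpha_ex x z g : fresh g <= z -> fequiv (FEx x g) (FEx z (fren (swap x z) g)).
Proof. by move=> hz e /=; split=> -[c /(@sat_swap x z g e c hz) H]; exists c. Qed.

Lemma bounded_collection B (P : nat -> nat -> Prop) :
  (forall a, a < B -> exists c, P a c) ->
  exists C, forall a, a < B -> exists2 c, c < C & P a c.
Proof.
elim: B => [|B IH] H; first by exists 0.
have [C HC] := IH (fun a ha => H a (ltnW ha)).
have [c0 Hc0] := H B (ltnSn B).
exists (maxn C c0.+1) => a; rewrite ltnS leq_eqVlt => /orP[/eqP->|ha].
- by exists c0 => //; lia.
- by have [c hc Pc] := HC a ha; exists c => //; lia.
Qed.

Lemma all_lt_ex_bounded B (P : nat -> nat -> Prop) :
  (forall a, a < B -> exists c, P a c) <->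
  (exists C, forall a, a < B -> exists2 c, c < C & P a c).
Proof.
split; first exact: bounded_collection.
by case=> C H a /H[c _ Pc]; exists c.
Qed.

Lemma ex_lt_all_bounded B (P : nat -> nat -> Prop) :
  (exists2 a, a < B & forall c, P a c) <->
  (forall C, exists2 a, a < B & forall c, c < C -> P a c).
Proof.
split=> [[a ha H] C|H]; first by exists a => // c _; apply: H.
apply: NNPP => none.
have [C HC] : exists C, forall a, a < B -> exists2 c, c < C & ~ P a c.
  apply: bounded_collection => a ha; apply: NNPP => all_P.
  by apply: none; exists a => // c; apply: NNPP => nP; apply: all_P; exists c.
have [a ha Ha] := H C; have [c hc nP] := HC a ha.
exact: nP (Ha c hc).
Qed.

Lemma sat_upd_fresh2 g e C Cv u a z c : fresh g <= C -> C != u -> C != z ->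
  (sat (upd (upd (upd e C Cv) u a) z c) g <-> sat (upd (upd e u a) z c) g).
Proof.
by move=> hC Cu Cz; rewrite (updC _ _ _ Cu) (updC _ _ _ Cz) sat_upd_fresh.
Qed.

Lemma ball_all u b z g : z != u -> z != b ->
  fequiv (FBAll u (TVar b) (FAll z g)) (FAll z (FBAll u (TVar b) g)).
Proof.
move=> zu zb e /=; rewrite eq_sym in zb; split=> H.
- by move=> c a; rewrite upd_neq // (updC _ _ _ zu) => /H.
- by move=> a ha c; move: (H c a); rewrite upd_neq // (updC _ _ _ zu); apply.
Qed.

Lemma bex_ex u b z g : z != u -> z != b ->
  fequiv (FBEx u (TVar b) (FEx z g)) (FEx z (FBEx u (TVar b) g)).
Proof.
move=> zu zb e /=; rewrite eq_sym in zb; split.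
- by case=> a ha [c Hc]; exists c, a; rewrite ?upd_neq // (updC _ _ _ zu).
- by case=> c [a]; rewrite upd_neq // (updC _ _ _ zu) => ha Hc; exists a => //; exists c.
Qed.

Lemma bex_all u b z C g : fresh g <= C -> C != u -> C != b -> C != z ->
  fequiv (FBEx u (TVar b) (FAll z g))
         (FAll C (FBEx u (TVar b) (FBAll z (TVar C) g))).
Proof.
move=> hC Cu Cb Cz e /=.
rewrite (ex_lt_all_bounded _ (fun a c => sat (upd (upd e u a) z c) g)).
have eb Cv : upd e C Cv b = e b by rewrite upd_neq // eq_sym.
have eC Cv a : upd (upd e C Cv) u a C = Cv by rewrite upd_neq ?upd_eq.
split=> H Cv.
- have [a ha Ha] := H Cv; exists a; rewrite ?eb // => c.
  by rewrite eC sat_upd_fresh2 //; apply: Ha.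
- have [a ha Ha] := H Cv; exists a; rewrite -?(eb Cv) // => c hc.
  by rewrite -(@sat_upd_fresh2 _ _ C Cv) //; apply: Ha; rewrite eC.
Qed.

Lemma ball_ex u b z C g : fresh g <= C -> C != u -> C != b -> C != z ->
  fequiv (FBAll u (TVar b) (FEx z g))
         (FEx C (FBAll u (TVar b) (FBEx z (TVar C) g))).
Proof.
move=> hC Cu Cb Cz e /=.
rewrite (all_lt_ex_bounded _ (fun a c => sat (upd (upd e u a) z c) g)).
have eb Cv : upd e C Cv b = e b by rewrite upd_neq // eq_sym.
have eC Cv a : upd (upd e C Cv) u a C = Cv by rewrite upd_neq ?upd_eq.
split=> -[Cv H]; exists Cv => a.
- rewrite eb => /H[c hc Hc]; exists c; rewrite ?eC ?sat_upd_fresh2 //.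
- rewrite -(eb Cv) => /H[c]; rewrite eC sat_upd_fresh2 // => hc Hc.
  by exists c.
Qed.

Lemma isPi0_inv f : isPi 0 f -> delta0 f.
Proof. by move=> h; inversion h. Qed.

Lemma isSigma0_inv f : isSigma 0 f -> delta0 f.
Proof. by move=> h; inversion h. Qed.

Lemma isPiS_inv k f :
  isPi k.+1 f -> isSigma k f \/ exists x g, f = FAll x g /\ isPi k.+1 g.
Proof. by move=> h; inversion h; [left | right; exists x, f0]. Qed.

Lemma isSigmaS_inv k f :
  isSigma k.+1 f -> isPi k f \/ exists x g, f = FEx x g /\ isSigma k.+1 g.
Proof. by move=> h; inversion h; [left | right; exists x, f0]. Qed.

Definition bquant_closed (K : form -> Prop) (f : form) : Prop := forall u b,
  (exists2 f', K f' /\ nquant f' <= nquant f & fequiv f' (FBAll u (TVar b) f)) /\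
  (exists2 f', K f' /\ nquant f' <= nquant f & fequiv f' (FBEx u (TVar b) f)).

Definition classes_bquant_closed (f : form) : Prop := forall m,
  (isPi m f -> bquant_closed (isPi m) f) /\ (isSigma m f -> bquant_closed (isSigma m) f).

Lemma bquant_closedW (K K' : form -> Prop) f :
  (forall g, K g -> K' g) -> bquant_closed K f -> bquant_closed K' f.
Proof.
move=> KK' Kf u b; have [[f1 [k1 q1] e1] [f2 [k2 q2] e2]] := Kf u b.
by split; [exists f1 | exists f2]; try (split; first exact: KK').
Qed.

Lemma bquant_closed_delta0 (K : form -> Prop) f :
  (forall g, delta0 g -> K g) -> delta0 f -> bquant_closed K f.
Proof.
move=> K0 f0 u b.
split; [exists (FBAll u (TVar b) f) | exists (FBEx u (TVar b) f)];
  by [split; first exact: K0 | ].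
Qed.

Lemma exists_fresh_var g u b x : exists2 z, fresh g <= z & [/\ z != u, z != b & z != x].
Proof. by exists (fresh g + u + b + x).+1; [lia | split; apply/eqP; lia]. Qed.

Section BoundedQuantifierStep.

Variables (k x : nat) (g : form).
Hypothesis IH : forall h, nquant h <= nquant g -> classes_bquant_closed h.

Lemma bquant_closed_all : isPi k.+1 g -> bquant_closed (isPi k.+1) (FAll x g).
Proof.
move=> hg u b.
have [z gz [zu zb zx]] := exists_fresh_var g u b x.
split.
- set g' := fren (swap x z) g.
  have q' : nquant g' <= nquant g by rewrite nquant_ren.
  have [/(_ (isPi_ren _ hg) u b) [[g2 [p2 q2] e2] _] _] := IH q' k.+1.
  exists (FAll z g2); first by split; [exact: PiAll | rewrite /= nquant_ren in q2 *].
  by rewrite e2 -ball_all // -alpha_all.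
- have [/(_ hg x z) [[g3 [p3 q3] e3] _] _] := IH (leqnn _) k.+1.
  have [/(_ p3 u b) [_ [g4 [p4 q4] e4]] _] := IH q3 k.+1.
  exists (FAll z g4); first by split; [exact: PiAll | rewrite /=; lia].
  by rewrite e4 e3 -bex_all.
Qed.

Lemma bquant_closed_ex : isSigma k.+1 g -> bquant_closed (isSigma k.+1) (FEx x g).
Proof.
move=> hg u b.
have [z gz [zu zb zx]] := exists_fresh_var g u b x.
split.
- have [_ /(_ hg x z) [_ [g3 [p3 q3] e3]]] := IH (leqnn _) k.+1.
  have [_ /(_ p3 u b) [[g4 [p4 q4] e4] _]] := IH q3 k.+1.
  exists (FEx z g4); first by split; [exact: SigmaEx | rewrite /=; lia].
  by rewrite e4 e3 -ball_ex.
- set g' := fren (swap x z) g.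
  have q' : nquant g' <= nquant g by rewrite nquant_ren.
  have [_ /(_ (isSigma_ren _ hg) u b) [_ [g2 [p2 q2] e2]]] := IH q' k.+1.
  exists (FEx z g2); first by split; [exact: SigmaEx | rewrite /= nquant_ren in q2 *].
  by rewrite e2 -bex_ex // -alpha_ex.
Qed.

End BoundedQuantifierStep.

Lemma isPi_isSigma_bquant_closed f : classes_bquant_closed f.
Proof.
move: {2}(nquant f).+1 (ltnSn (nquant f)) => N; elim: N f => // N IHN f hf m.
have IH h : nquant h < nquant f -> classes_bquant_closed h.
  by move=> hh; apply: IHN; lia.
elim: m => [|k IHk].
  by split=> [/isPi0_inv|/isSigma0_inv]; apply: bquant_closed_delta0 => *;
    [apply: Pi0 | apply: Sigma0].
split.
- case/isPiS_inv => [/(IHk.2)|[x [g [Ef hg]]]].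
    by apply: bquant_closedW => g; apply: PiSigma.
  by subst f; apply: bquant_closed_all => // h hh; apply: IH => /=; lia.
- case/isSigmaS_inv => [/(IHk.1)|[x [g [Ef hg]]]].
    by apply: bquant_closedW => g; apply: SigmaPi.
  by subst f; apply: bquant_closed_ex => // h hh; apply: IH => /=; lia.
Qed.

Lemma isPi_ball m f u b :
  isPi m f -> exists2 f', isPi m f' & fequiv f' (FBAll u (TVar b) f).
Proof.
by move=> hf; have [[f' [hf' _] e'] _] := (isPi_isSigma_bquant_closed f m).1 hf u b; exists f'.
Qed.

Lemma isPi_bex m f u b :
  isPi m f -> exists2 f', isPi m f' & fequiv f' (FBEx u (TVar b) f).
Proof.
by move=> hf; have [_ [f' [hf' _] e']] := (isPi_isSigma_bquant_closed f m).1 hf u b; exists f'.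
Qed.

Lemma ex_ex_contract (R : nat -> nat -> Prop) :
  (forall a y y', y <= y' -> R a y -> R a y') ->
  (exists a y, R a y) <-> (exists y, exists2 a, a < y & R a y).
Proof.
move=> mono; split=> [[a [y Ray]]|[y [a _ Ray]]]; last by exists a, y.
by exists (maxn y a.+1), a; [lia | apply: mono Ray; lia].
Qed.

Lemma all_all_ex_contract (R : nat -> nat -> nat -> Prop) :
  (forall a x y x' y', x' <= x -> y <= y' -> R a x y -> R a x' y') ->
  (forall a x, exists y, R a x y) <-> (forall x, exists y, forall a, a < x -> R a x y).
Proof.
move=> mono; split=> [H x|H a x].
- have [C HC] := @bounded_collection x (fun a y => R a x y) (fun a _ => H a x).
  by exists C => a /HC[y hy Ry]; apply: mono Ry; lia.
- have [y Hy] := H (maxn x a.+1); exists y.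
  by apply: (mono a (maxn x a.+1) y) => //; [lia | apply: Hy; lia].
Qed.

Lemma all_ex_pos (R : nat -> nat -> Prop) :
  (forall x y x' y', x' <= x -> y <= y' -> R x y -> R x' y') ->
  (forall x, exists y, R x y) <-> (forall x, 0 < x -> exists2 y, 0 < y & R x y).
Proof.
move=> mono; split=> [H x _|H x].
- by have [y Rxy] := H x; exists y.+1 => //; apply: mono Rxy.
- by have [y _ Rxy] := H x.+1 isT; exists y; apply: mono Rxy.
Qed.

Definition up_closed Y H : Prop :=
  forall e y y', y <= y' -> sat (upd e Y y) H -> sat (upd e Y y') H.

Definition decr_incr X Y G : Prop := forall e x y x' y', x' <= x -> y <= y' ->
  sat (upd (upd e X x) Y y) G -> sat (upd (upd e X x') Y y') G.

Definition indep X H : Prop := forall e a, sat (upd e X a) H <-> sat e H.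

Lemma sigma_ex_normal m S X Y : isSigma m.+1 S -> X != Y -> fresh S <= X -> fresh S <= Y ->
  exists H, [/\ isPi m H, fequiv S (FEx Y H), up_closed Y H & indep X H].
Proof.
move Ek : m.+1 => k hS; elim: hS Ek => [f _ //|k' f hf [Ek]|k' w S1 hS1 IH Ek] XY hX hY.
  subst k'; exists f; split => // [e|e y y' _|e a]; rewrite /= ?sat_upd_fresh //.
  by split=> [Hf|[y]]; [exists 0 | ]; rewrite sat_upd_fresh.
have [wX wY] : w < X /\ w < Y by move: hX hY => /=; lia.
have [H1 [p1 e1 up1 ind1]] :=
  IH Ek XY (leq_trans (leq_maxr _ _) hX) (leq_trans (leq_maxr _ _) hY).
have [H p eH] := isPi_bex w Y p1.
have Yw : Y != w by apply/eqP; lia.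
have wY' : w != Y by rewrite eq_sym.
have Xw : X != w by apply/eqP; lia.
have EH e y : sat (upd e Y y) H <-> exists2 a, a < y & sat (upd (upd e w a) Y y) H1.
  by rewrite eH /= upd_eq; split=> -[a ha]; rewrite updC // => Ha; exists a.
exists H; split => // [e|e y y' hy /EH[a ha Ha]|e c].
- transitivity (exists a y, sat (upd (upd e w a) Y y) H1).
    by split=> -[a Ha]; exists a; apply/(e1 (upd e w a)).
  rewrite (@ex_ex_contract (fun a y => sat (upd (upd e w a) Y y) H1)); last first.
    by move=> a; apply: up1.
  by split=> -[y Hy]; exists y; apply/EH.
- by apply/EH; exists a; [lia | apply: up1 Ha].
- rewrite !eH /= upd_neq 1?eq_sym //.
  by split=> -[a ha Ha]; exists a; rewrite // updC // ind1 in Ha *.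
Qed.

Lemma pi_all_ex_normal m F X Y : isPi m.+2 F -> X != Y -> fresh F <= X -> fresh F <= Y ->
  exists2 G, isPi m G /\ decr_incr X Y G & fequiv F (FAll X (FEx Y G)).
Proof.
move Ek : m.+2 => k hF; elim: hF Ek => [f _ //|k' S hS [Ek]|k' v F1 hF1 IH Ek] XY hX hY.
  subst k'; have [H [pH eH upH indH]] := sigma_ex_normal hS XY hX hY.
  have EH e x y : sat (upd (upd e X x) Y y) H <-> sat (upd e Y y) H.
    by rewrite updC // indH.
  exists H; first by split=> // e x y x' y' _ hy; rewrite !EH; apply: upH.
  move=> e; rewrite eH /=.
  by split=> [[y Hy] x|/(_ 0) [y Hy]]; exists y; rewrite EH in Hy *.
have [vX vY] : v < X /\ v < Y by move: hX hY => /=; lia.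
have [G1 [p1 di1] e1] :=
  IH Ek XY (leq_trans (leq_maxr _ _) hX) (leq_trans (leq_maxr _ _) hY).
have [G pG eG] := isPi_ball v X p1.
have Xv : X != v by apply/eqP; lia.
have Yv : Y != v by apply/eqP; lia.
pose R e a x y := sat (upd (upd (upd e v a) X x) Y y) G1.
have EG e x y : sat (upd (upd e X x) Y y) G <-> forall a, a < x -> R e a x y.
  rewrite eG /= upd_neq // upd_eq.
  by split=> H a /H; rewrite /R (updC _ _ _ Yv) (updC _ _ _ Xv).
exists G.
  split=> // e x y x' y' hx hy /EG H; apply/EG => a ha.
  by apply: (di1 _ x y) => //; apply: H; lia.
move=> e; transitivity (forall a x, exists y, R e a x y).
  by split=> H a; apply/e1/H.
rewrite (@all_all_ex_contract (R e)); last by move=> a; apply: di1.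
by split=> H x; have [y Hy] := H x; exists y; apply/EG.
Qed.

Lemma nth_cat2 (v : seq nat) x y j :
  nth 0 (v ++ [:: x; y]) j =
  if j == size v then x else if j == (size v).+1 then y else nth 0 v j.
Proof.
rewrite nth_cat; case: ltnP => hj; first by rewrite !ifN //; apply/eqP; lia.
rewrite [nth 0 v j]nth_default //.
have [k ->] : exists k, j = size v + k by exists (j - size v); lia.
rewrite addKn; case: k => [|[|k]]; rewrite ?addn0 ?addn1 ?eqxx // ?ifN //= ?nth_nil //;
  apply/eqP; lia.
Qed.

Lemma swap_l x z : swap x z x = z.
Proof. by rewrite /swap eqxx. Qed.

Lemma swap_r x z : swap x z z = x.
Proof. by rewrite /swap eqxx; case: eqP. Qed.

Lemma swap_id x z j : j != x -> j != z -> swap x z j = j.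
Proof. by rewrite /swap => /negbTE -> /negbTE ->. Qed.

Lemma nth_cat2_swap (v : seq nat) x y X : (size v).+2 <= X ->
  nth 0 (v ++ [:: x; y]) \o (swap (size v) X \o swap (size v).+1 X.+1)
  = upd (upd (nth 0 v) X x) X.+1 y.
Proof.
move=> hX; apply: functional_extensionality => j /=; rewrite /upd.
have swap_idP a b c : c <> a -> c <> b -> swap a b c = c.
  by move=> /eqP ? /eqP ?; apply: swap_id.
case: (eqVneq j X.+1) => [->|j1].
  by rewrite swap_r swap_idP ?nth_cat2 ?eqxx ?ifN //; apply/eqP; lia.
case: (eqVneq j X) => [->|j0].
  by rewrite (@swap_idP (size v).+1) ?swap_r ?nth_cat2 ?eqxx ?ifN //; apply/eqP; lia.
case: (eqVneq j (size v).+1) => [->|jL1].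
  rewrite swap_l swap_idP ?nth_cat2 ?ifN; try (apply/eqP; lia).
  by rewrite !nth_default //; lia.
case: (eqVneq j (size v)) => [->|jL].
  rewrite (@swap_idP (size v).+1) ?swap_l ?nth_cat2 ?ifN; try (apply/eqP; lia).
  by rewrite !nth_default //; lia.
by rewrite !swap_id ?nth_cat2 ?(negbTE jL) ?(negbTE jL1).
Qed.

Definition splits_at m L F G : Prop := isPi m G /\ forall v : seq nat, size v = L ->
  (sat (nth 0 v) F <-> forall x, exists y, sat (nth 0 (v ++ [:: x; y])) G) /\
  (forall x y x' y', x' <= x -> y <= y' ->
     sat (nth 0 (v ++ [:: x; y])) G -> sat (nth 0 (v ++ [:: x'; y'])) G).

Lemma exists_splits_at m L F : isPi m.+2 F -> exists G, splits_at m L F G.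
Proof.
move=> hF; pose X := maxn (fresh F) L.+2.
have XX1 : X != X.+1 by rewrite ltn_eqF.
have [G0 [p0 di0] e0] := pi_all_ex_normal hF XX1 (leq_maxl _ _)
  (leq_trans (leq_maxl _ _) (leqnSn X)).
pose s := swap L X \o swap L.+1 X.+1.
have s_inj : injective s := inj_comp (@swap_inj _ _) (@swap_inj _ _).
exists (fren s G0); split; first exact: isPi_ren.
move=> v sv; subst L.
have ES x y : sat (nth 0 (v ++ [:: x; y])) (fren s G0) <->
              sat (upd (upd (nth 0 v) X x) X.+1 y) G0.
  by rewrite sat_ren // nth_cat2_swap // leq_maxr.
split; first by rewrite e0 /=; split=> H x; have [y Hy] := H x; exists y; apply/ES.
by move=> x y x' y' hx hy /ES H; apply/ES; apply: di0 H.
Qed.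

Lemma splits_at_pos m L F G v : splits_at m L F G -> size v = L ->
  (sat (nth 0 v) F <->
     forall x, 0 < x -> exists2 y, 0 < y & sat (nth 0 (v ++ [:: x; y])) G) /\
  (forall x, (forall y, 0 < y -> ~ sat (nth 0 (v ++ [:: x; y])) G) ->
     forall x', x <= x' -> forall y, 0 < y -> ~ sat (nth 0 (v ++ [:: x'; y])) G).
Proof.
move=> [_ HG] /HG [EF mono]; split.
  by rewrite EF; apply: all_ex_pos.
by move=> x noG x' hx y hy /(mono _ _ x y hx (leqnn y)); apply: noG.
Qed.

Definition next_form m L F : form := epsilon (inhabits F) (splits_at m L F).

Lemma next_formP m L F : isPi m.+2 F -> splits_at m L F (next_form m L F).
Proof. by move=> hF; apply: epsilon_spec; apply: exists_splits_at. Qed.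

(* [family n f d] is P_(n-d) of the paper; it has 1 + 2d arguments. *)
Fixpoint family n f d : form :=
  if d is d'.+1 then next_form (2 * (n - d) - 3) (1 + 2 * d') (family n f d') else f.

Section Family.

Variables (n : nat) (f : form).
Hypothesis hf : isPi (2 * n - 3) f.

Lemma family_isPi d : d <= n - 2 -> isPi (2 * (n - d) - 3) (family n f d).
Proof.
elim: d => [|d IH] hd; first by rewrite subn0.
have := IH (ltnW hd); rewrite (_ : 2 * (n - d) - 3 = (2 * (n - d.+1) - 3).+2); last lia.
by move/(@next_formP _ (1 + 2 * d)) => [].
Qed.

Lemma family_splits d : d < n - 2 ->
  splits_at (2 * (n - d.+1) - 3) (1 + 2 * d) (family n f d) (family n f d.+1).
Proof.
move=> hd; have := family_isPi (ltnW hd).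
by rewrite (_ : 2 * (n - d) - 3 = (2 * (n - d.+1) - 3).+2); [apply: next_formP | lia].
Qed.

End Family.

Theorem lemma3 (n : nat) (Pn : seq nat -> Prop) :
  2 <= n ->
  Pi0_pred (2 * n - 3) 1 Pn ->
  exists Pfam : nat -> seq nat -> Prop,
    (forall v, Pfam n v <-> Pn v) /\
    (forall i, 2 <= i < n -> Pi0_pred (2 * i - 3) (1 + 2 * (n - i)) (Pfam i)) /\
    (forall i, 2 <= i < n ->
       forall xbar : seq nat, positive_args (1 + 2 * (n - i - 1)) xbar ->
         (Pfam i.+1 xbar <->
            (forall x, 0 < x -> exists2 y, 0 < y & Pfam i (xbar ++ [:: x; y])))
         /\
         (forall x, 0 < x ->
            (forall y, 0 < y -> ~ Pfam i (xbar ++ [:: x; y])) ->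
            forall x', x <= x' -> forall y, 0 < y -> ~ Pfam i (xbar ++ [:: x'; y]))).
Proof.
move=> hn [f [hf Pn_f]].
pose P i v := if i == n then Pn v else sat (nth 0 v) (family n f (n - i)).
have P_sat i v : i < n -> P i v <-> sat (nth 0 v) (family n f (n - i)).
  by move=> hi; rewrite /P ifN //; apply/eqP; lia.
have step i : 2 <= i < n -> splits_at (2 * i - 3) (1 + 2 * (n - i - 1))
                              (family n f (n - i - 1)) (family n f (n - i)).
  move=> hi; have hd : n - i - 1 < n - 2 by lia.
  have E1 : (n - i - 1).+1 = n - i by lia.
  have E2 : n - (n - i) = i by lia.
  by have := family_splits hf hd; rewrite E1 E2.
exists P; split; first by move=> v; rewrite /P eqxx.
split=> i hi; have [pG _] := step i hi; have /andP[_ hin] := hi.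
  by exists (family n f (n - i)); split=> // v _; apply: P_sat.
move=> xbar [sz pos]; have [EF mono] := splits_at_pos (step i hi) sz.
have Pi1 : P i.+1 xbar <-> sat (nth 0 xbar) (family n f (n - i - 1)).
  have [hi1|hn1] := ltnP i.+1 n; first by rewrite P_sat // subnS subn1.
  have En : i.+1 = n by lia.
  rewrite /P En eqxx (_ : n - i - 1 = 0) /=; last lia.
  by apply: Pn_f; split => //; rewrite sz; lia.
split.
  rewrite Pi1 EF.
  by split=> H x /H[y hy Hy]; exists y; rewrite // P_sat in Hy *.
by move=> x _ H x' hx y hy; rewrite P_sat //; apply: mono hx y hy => y' /H; rewrite P_sat.
Qed.
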